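(* Let $X$ and $Y$ be $\omega$ type $P$-spaces. Then the product topology of $\Sigma\mathcal O(X)$ and $\Sigma\mathcal O(Y)$ coincides with the Scott topology of the product poset $\mathcal O(X)\times\mathcal O(Y)$, i.e. $\Sigma\mathcal O(X)\times\Sigma\mathcal O(Y)=\Sigma(\mathcal O(X)\times\mathcal O(Y))$.
   Context: $\mathcal O(X)$ is the lattice of open subsets of $X$ ordered by inclusion; for a poset $L$, $\Sigma L$ denotes $L$ with the Scott topology (a set $U$ is Scott open iff it is an upper set and for every directed $D$ with existing supremum, $\bigvee D\in U$ implies $D\cap U\neq\emptyset$); $\mathcal O(X)\times\mathcal O(Y)$ has the coordinatewise order. A topological space is an $\omega$ type space if it has a subbase consisting of countable subsets. A space is a $P$-space if the intersection of any countable family of open sets is open. *)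

From HB Require Import structures.
From mathcomp Require Import all_boot all_order.
From mathcomp Require Import boolp classical_sets cardinality topology.

Set Implicit Arguments.
Unset Strict Implicit.
Unset Printing Implicit Defensive.

Local Open Scope classical_set_scope.

Definition opens (X : topologicalType) := {U : set X | open U}.

Definition opens_le (X : topologicalType) (U V : opens X) : Prop :=
  proj1_sig U `<=` proj1_sig V.

Definition prod_le (A B : Type) (leA : A -> A -> Prop) (leB : B -> B -> Prop)
  (p q : A * B) : Prop := leA p.1 q.1 /\ leB p.2 q.2.

Definition directed (T : Type) (le : T -> T -> Prop) (D : set T) : Prop :=
  (exists d, D d) /\
  (forall x y, D x -> D y -> exists z, [/\ D z, le x z & le y z]).

Definition is_sup (T : Type) (le : T -> T -> Prop) (D : set T) (s : T) : Prop :=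
  (forall d, D d -> le d s) /\ (forall u, (forall d, D d -> le d u) -> le s u).

Definition scott_open (T : Type) (le : T -> T -> Prop) (U : set T) : Prop :=
  (forall x y, U x -> le x y -> U y) /\
  (forall D s, directed le D -> is_sup le D s -> U s -> exists d, D d /\ U d).

Definition product_topology_on (A B : Type) (tA : set A -> Prop) (tB : set B -> Prop)
  (W : set (A * B)) : Prop :=
  forall p, W p -> exists U V, [/\ tA U, tB V, U p.1, V p.2 &
                                 forall a b, U a -> V b -> W (a, b)].

Definition is_subbase (X : topologicalType) (B : set (set X)) : Prop :=
  (forall S, B S -> open S) /\
  (forall U : set X, open U -> forall x, U x ->
     exists s : seq (set X), [/\ (forall S, S \in s -> B S),
        (forall S, S \in s -> S x) &
        (forall y, (forall S, S \in s -> S y) -> U y)]).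

Definition omega_type (X : topologicalType) : Prop :=
  exists B : set (set X), is_subbase B /\ (forall S, B S -> countable S).

Definition P_space (X : topologicalType) : Prop :=
  forall F : nat -> set X, (forall n, open (F n)) -> open (\bigcap_n F n).

From HB Require Import structures.
From mathcomp Require Import all_boot all_order.
From mathcomp Require Import boolp classical_sets cardinality topology.

(* An omega type P-space is Alexandrov: the intersection of the subbasic sets
   containing x is cut out, inside one countable subbasic set S0 around x, by
   countably many subbasic sets (one for each point of S0 it omits), so it is
   the least open neighbourhood of x. Hence O(X) is algebraic: each open set is
   the directed union of finite unions of least neighbourhoods, and these are
   compact elements. For algebraic posets the Scott topology of the product is
   the product of the Scott topologies: a Scott open W containing (a, b)
   contains some pair (c, d) of compact approximants of (a, b), hence the
   rectangle of the two Scott open up-sets of c and d. *)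

Set Implicit Arguments.
Unset Strict Implicit.
Unset Printing Implicit Defensive.
Local Open Scope classical_set_scope.

Definition compact_elt (T : Type) (leT : T -> T -> Prop) (c : T) : Prop :=
  scott_open leT (leT c).

Definition algebraic (T : Type) (leT : T -> T -> Prop) : Prop :=
  forall a, exists C : set T,
    [/\ directed leT C, is_sup leT C a & forall c, C c -> compact_elt leT c].

Lemma scott_openI (T : Type) (leT : T -> T -> Prop) (U V : set T) :
  scott_open leT U -> scott_open leT V -> scott_open leT (U `&` V).
Proof.
move=> [Uup Uscott] [Vup Vscott]; split.
  by move=> x y [Ux Vx] xy; split; [exact: Uup xy | exact: Vup xy].
move=> D s Ddir Dsup [Us Vs].
have [d [Dd Ud]] := Uscott _ _ Ddir Dsup Us.
have [e [De Ve]] := Vscott _ _ Ddir Dsup Vs.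
have [z [Dz dz ez]] := Ddir.2 _ _ Dd De.
by exists z; split=> //; split; [exact: Uup dz | exact: Vup ez].
Qed.

Lemma scott_openT (T : Type) (leT : T -> T -> Prop) : scott_open leT setT.
Proof. by split=> // D s [[d Dd] _]; exists d. Qed.

Section ScottProduct.
Variables (A B : Type) (leA : A -> A -> Prop) (leB : B -> B -> Prop).
Local Notation le := (prod_le leA leB).

Lemma directed_fst (D : set (A * B)) : directed le D -> directed leA (fst @` D).
Proof.
move=> [[d Dd] Ddir]; split; first by exists d.1, d.
move=> _ _ [p Dp <-] [q Dq <-]; have [z [Dz [pz _] [qz _]]] := Ddir _ _ Dp Dq.
by exists z.1; split=> //; exists z.
Qed.

Lemma directed_snd (D : set (A * B)) : directed le D -> directed leB (snd @` D).
Proof.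
move=> [[d Dd] Ddir]; split; first by exists d.2, d.
move=> _ _ [p Dp <-] [q Dq <-]; have [z [Dz [_ pz] [_ qz]]] := Ddir _ _ Dp Dq.
by exists z.2; split=> //; exists z.
Qed.

Lemma is_sup_fst (D : set (A * B)) s : is_sup le D s -> is_sup leA (fst @` D) s.1.
Proof.
move=> [ub least]; split=> [_ [d Dd <-]|u ubu]; first by case: (ub d Dd).
have [] // : le s (u, s.2).
by apply: least => d Dd; split; [apply: ubu; exists d | case: (ub d Dd)].
Qed.

Lemma is_sup_snd (D : set (A * B)) s : is_sup le D s -> is_sup leB (snd @` D) s.2.
Proof.
move=> [ub least]; split=> [_ [d Dd <-]|u ubu]; first by case: (ub d Dd).
have [] // : le s (s.1, u).
by apply: least => d Dd; split; [case: (ub d Dd) | apply: ubu; exists d].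
Qed.

Lemma directed_setX (C : set A) (D : set B) :
  directed leA C -> directed leB D -> directed le (C `*` D).
Proof.
move=> [[c Cc] Cdir] [[d Dd] Ddir]; split; first by exists (c, d).
move=> [c1 d1] [c2 d2] [/= Cc1 Dd1] [/= Cc2 Dd2].
have [c3 [Cc3 c13 c23]] := Cdir _ _ Cc1 Cc2.
have [d3 [Dd3 d13 d23]] := Ddir _ _ Dd1 Dd2.
by exists (c3, d3).
Qed.

Lemma is_sup_setX (C : set A) (D : set B) a b : C !=set0 -> D !=set0 ->
  is_sup leA C a -> is_sup leB D b -> is_sup le (C `*` D) (a, b).
Proof.
move=> [c Cc] [d Dd] [ubC leastC] [ubD leastD]; split.
  by move=> [c' d'] [/= Cc' Dd']; split; [exact: ubC | exact: ubD].
move=> u ubu; split.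
- by apply: leastC => c' Cc'; have [] : le (c', d) u by apply: ubu.
- by apply: leastD => d' Dd'; have [] : le (c, d') u by apply: ubu.
Qed.

Lemma scott_open_product_topology (W : set (A * B)) :
  product_topology_on (scott_open leA) (scott_open leB) W -> scott_open le W.
Proof.
move=> prodW; split.
  move=> p [a b] Wp [/= pa pb].
  have [U [V [[Uup _] [Vup _] Up Vp UVW]]] := prodW p Wp.
  by apply: UVW; [exact: Uup pa | exact: Vup pb].
move=> D s Ddir Dsup Ws.
have [U [V [[Uup Uscott] [Vup Vscott] Us Vs UVW]]] := prodW s Ws.
have [_ [[p Dp <-] Up]] := Uscott _ _ (directed_fst Ddir) (is_sup_fst Dsup) Us.
have [_ [[q Dq <-] Vq]] := Vscott _ _ (directed_snd Ddir) (is_sup_snd Dsup) Vs.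
have [[a b] [Dab [/= pa _] [_ qb]]] := Ddir.2 _ _ Dp Dq.
by exists (a, b); split=> //; apply: UVW; [exact: Uup pa | exact: Vup qb].
Qed.

Lemma product_topology_scott_open (W : set (A * B)) :
  algebraic leA -> algebraic leB -> scott_open le W ->
  product_topology_on (scott_open leA) (scott_open leB) W.
Proof.
move=> algA algB [Wup Wscott] [a b] Wab.
have [C [Cdir Csup Ccpt]] := algA a.
have [D [Ddir Dsup Dcpt]] := algB b.
have CDsup := is_sup_setX Cdir.1 Ddir.1 Csup Dsup.
have [[c d] [[/= Cc Dd] Wcd]] := Wscott _ _ (directed_setX Cdir Ddir) CDsup Wab.
exists (leA c), (leB d); split; [exact: Ccpt | exact: Dcpt | | |].
- exact: Csup.1.
- exact: Dsup.1.
- by move=> a' b' ca' db'; apply: Wup Wcd _.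
Qed.

End ScottProduct.



Lemma scott_open_opens_mem (X : topologicalType) (x : X) :
  scott_open (@opens_le X) [set U | proj1_sig U x].
Proof.
split=> [U V Ux UV|D S _ [_ Sleast] Sx]; first exact: UV.
pose DU : opens X :=
  exist _ _ (bigcup_open (fun (d : opens X) (_ : D d) => proj2_sig d)).
have [d Dd dx] : proj1_sig DU x by apply: (Sleast DU) => // d Dd y dy; exists d.
by exists d.
Qed.

Lemma scott_open_opens_subset (X : topologicalType) (s : seq X) :
  scott_open (@opens_le X) [set U | forall x, x \in s -> proj1_sig U x].
Proof.
elim: s => [|x s IHs].
  by rewrite (_ : [set U | _] = setT); [exact: scott_openT | apply/seteqP].
rewrite (_ : [set U | _] =
  [set U | proj1_sig U x] `&` [set U | forall y, y \in s -> proj1_sig U y]).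
  exact: scott_openI (scott_open_opens_mem x) IHs.
apply/seteqP; split=> [U sU|U [Ux sU] y].
  by split=> [|y ys]; apply: sU; rewrite inE ?eqxx ?ys ?orbT.
by rewrite inE => /orP[/eqP->|/sU].
Qed.

Lemma P_space_bigcap_open (X : topologicalType) (T : Type) (D : set T)
    (F : T -> set X) :
  P_space X -> countable D -> (forall i, D i -> open (F i)) ->
  open (\bigcap_(i in D) F i).
Proof.
move=> PX /countable_injP[f finj] oF.
pose G n := \bigcap_(i in [set i | D i /\ f i = n]) F i.
have -> : \bigcap_(i in D) F i = \bigcap_n G n.
  apply/seteqP; split=> [y Fy n _ i [Di _]|y Gy i Di]; first exact: Fy.
  exact: Gy (f i) I i (conj Di erefl).
apply: PX => n; rewrite /G.
have [[i [Di <-]]|Dn] := pselect (exists i, D i /\ f i = n).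
  have -> : [set j | D j /\ f j = f i] = [set i].
    apply/seteqP; split=> [j [Dj fji]|_ ->] //.
    exact: finj (mem_set Dj) (mem_set Di) fji.
  by rewrite bigcap_set1; exact: oF.
have -> : [set j | D j /\ f j = n] = set0.
  by apply/seteqP; split=> // j Djn; apply: Dn; exists j.
by rewrite bigcap_set0; exact: openT.
Qed.

Definition min_nbhd (X : topologicalType) (x : X) (M : set X) : Prop :=
  [/\ open M, M x & forall U, open U -> U x -> M `<=` U].

Lemma omega_type_P_space_min_nbhd (X : topologicalType) :
  omega_type X -> P_space X -> forall x : X, exists M, min_nbhd x M.
Proof.
move=> [B [[Bopen Bsub] Bcount]] PX x.
pose M := \bigcap_(S in [set S | B S /\ S x]) S.
exists M; split=> [||U oU Ux y My]; last 2 first.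
- by move=> S [].
- have [s [sB sx sU]] := Bsub U oU x Ux.
  by apply: sU => S Ss; apply: My; split; [exact: sB | exact: sx].
have [[S0 [BS0 S0x]]|noS] := pselect (exists S, B S /\ S x); last first.
  have -> : M = setT.
    by apply/seteqP; split=> // y _ S BSx; exfalso; apply: noS; exists S.
  exact: openT.
have /choice[sep sepP] : forall z, exists S, ~ M z -> [/\ B S, S x & ~ S z].
  move=> z; have [Mz|nMz] := pselect (M z); first by exists setT.
  have [S sepS] : exists S, [/\ B S, S x & ~ S z].
    apply: contrapT => noS; apply: nMz => S [BS Sx].
    by apply: contrapT => nSz; apply: noS; exists S.
  by exists S.
have -> : M = S0 `&` \bigcap_(z in S0 `\` M) sep z.
  apply/seteqP; split=> [y My|y [S0y sepy]].
    split; first exact: My.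
    by move=> z [_ nMz]; have [BS Sx _] := sepP z nMz; exact: My.
  apply: contrapT => nMy; have [_ _] := sepP y nMy; apply; exact: sepy.
apply: openI; first exact: Bopen.
apply: P_space_bigcap_open => //.
  exact: sub_countable (subset_card_le (@subDsetl _ _ _)) (Bcount _ BS0).
by move=> z [_ nMz]; have [BS _ _] := sepP z nMz; exact: Bopen.
Qed.

Section LeastNeighbourhoods.
Variables (X : topologicalType) (M : X -> set X).
Hypothesis minM : forall x, min_nbhd x (M x).

Let openM x : open (M x). Proof. by case: (minM x). Qed.

Definition fin_nbhd (s : seq X) : opens X :=
  exist _ (\bigcup_(x in [set x | x \in s]) M x) (bigcup_open (fun x _ => openM x)).

Lemma fin_nbhd_self s x : x \in s -> proj1_sig (fin_nbhd s) x.
Proof. by move=> xs; exists x => //; case: (minM x). Qed.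

Lemma fin_nbhd_le s U :
  opens_le (fin_nbhd s) U <-> (forall x, x \in s -> proj1_sig U x).
Proof.
split=> [sU x xs|sU y [x xs Mxy]]; first by apply: sU; exact: fin_nbhd_self.
by case: (minM x) => _ _; apply; [exact: proj2_sig U | exact: sU | exact: Mxy].
Qed.

Lemma compact_fin_nbhd s : compact_elt (@opens_le X) (fin_nbhd s).
Proof.
rewrite /compact_elt
  (_ : opens_le (fin_nbhd s) = [set U | forall x, x \in s -> proj1_sig U x]).
  exact: scott_open_opens_subset.
by apply/funext => U; apply/propext; exact: fin_nbhd_le.
Qed.

Lemma opens_algebraic : algebraic (@opens_le X).
Proof.
move=> A; pose S := [set s : seq X | forall x, x \in s -> proj1_sig A x].
exists (fin_nbhd @` S); split; last by move=> _ [s _ <-]; exact: compact_fin_nbhd.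
- split; first by exists (fin_nbhd [::]), [::].
  move=> _ _ [s sA <-] [t tA <-]; exists (fin_nbhd (s ++ t)); split.
  + by exists (s ++ t) => // x; rewrite mem_cat => /orP[/sA|/tA].
  + by apply/fin_nbhd_le => x xs; apply: fin_nbhd_self; rewrite mem_cat xs.
  + by apply/fin_nbhd_le => x xt; apply: fin_nbhd_self; rewrite mem_cat xt orbT.
- split=> [_ [s sA <-]|U ubU x Ax]; first exact/fin_nbhd_le.
  apply: (ubU (fin_nbhd [:: x])); last exact/fin_nbhd_self/mem_head.
  by exists [:: x] => // y; rewrite inE => /eqP->.
Qed.

End LeastNeighbourhoods.



Lemma omega_type_P_space_opens_algebraic (X : topologicalType) :
  omega_type X -> P_space X -> algebraic (@opens_le X).
Proof.
move=> oX PX; have /choice[M minM] := omega_type_P_space_min_nbhd oX PX.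
exact: opens_algebraic minM.
Qed.

Theorem theorem4p4 (X Y : topologicalType) :
  omega_type X -> P_space X -> omega_type Y -> P_space Y ->
  forall W : set (opens X * opens Y),
    product_topology_on (scott_open (@opens_le X)) (scott_open (@opens_le Y)) W <->
    scott_open (prod_le (@opens_le X) (@opens_le Y)) W.
Proof.
move=> oX PX oY PY W; split; first exact: scott_open_product_topology.
by apply: product_topology_scott_open; exact: omega_type_P_space_opens_algebraic.
Qed.
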